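(* Assume $E\setminus T\ne\emptyset$ and $\epsilon\ge0$. Let $f\in\mathbb{R}^E$ be feasible with $\xi_r(f)\le(1+\epsilon)\xi_r(f^* )$. Let $g_0=f$ and for $j\ge1$ let $g_j=g_{j-1}-\frac{\Delta_{e_j}(g_{j-1})}{R_{e_j}}c_{e_j}$, where $e_1,e_2,\dots$ are drawn independently from $p$; let $w_j$ be the tree induced voltages of $g_j$. Let $K'$ be uniform on $\{0,1,\dots,\lceil\tau\rceil-1\}$, independent of the $e_j$. Then \[ \mathbb{E}\big[\mathrm{gap}(g_{K'},w_{K'})\big]\le\epsilon\,\xi_r(f^* ). \]
   Context: Let $G=(V,E,w)$ be a connected undirected graph with resistances $r_e=1/w_e>0$. Each edge has a fixed orientation $(a,b)$; for $f\in\mathbb{R}^E$ write $f(b,a):=-f(a,b)$. The incidence matrix $B\in\mathbb{R}^{E\times V}$ has $B_{(a,b),c}=1$ if $c=a$, $-1$ if $c=b$, $0$ otherwise; $R=\mathrm{diag}(r_e)_{e\in E}$; $L=B^TR^{-1}B$. The energy of $f$ is $\xi_r(f)=f^TRf$. Fix $\chi\in\mathbb{R}^V$ with $\sum_a\chi(a)=0$; $f$ is feasible if $B^Tf=\chi$; $f^*$ is the unique feasible $f$ minimizing $\xi_r(f)$. The dual energy of $v\in\mathbb{R}^V$ is $\zeta_r(v)=2v^T\chi-v^TLv$ and $\mathrm{gap}(f,v)=\xi_r(f)-\zeta_r(v)$. Let $T\subseteq E$ be a spanning tree. For vertices $a,b$, $\pi_{(a,b)}\in\mathbb{R}^E$ is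 the unit flow from $a$ to $b$ along the unique $a$–$b$ path in $T$. For $e=(a,b)\in E\setminus T$, $c_e=\mathbf{1}_e-\pi_{(a,b)}$, $R_e=c_e^TRc_e$, $\Delta_e(f)=f^TRc_e$. The tree condition number is $\tau=\sum_{e\in E\setminus T}R_e/r_e$ and $p$ is the distribution on $E\setminus T$ with $p_e=\frac{R_e}{r_e\tau}$. Fix a root $s\in V$; the tree induced voltages of $f$ are $v(a)=\sum r_{e'}f(e')$, summing over the edges $e'$ of the tree path from $a$ to $s$, each traversed in the direction of the path (with the antisymmetry convention). *)

From HB Require Import structures.
From mathcomp Require Import all_boot all_order all_algebra.
Set Implicit Arguments. Unset Strict Implicit. Unset Printing Implicit Defensive.
Import Order.TTheory GRing.Theory Num.Theory.
Local Open Scope ring_scope.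

Section Electrical.
Variables (R : archiRealFieldType) (V E : finType).
(* edge e is oriented (src e, dst e); r e is its resistance *)
Variables (src dst : E -> V) (r : E -> R).

Definition incid (e : E) (c : V) : R :=
  (c == src e)%:R - (c == dst e)%:R.

Definition feasible (chi : V -> R) (f : E -> R) : Prop :=
  forall c, \sum_(e : E) incid e c * f e = chi c.

Definition energy (f : E -> R) : R := \sum_(e : E) r e * f e ^+ 2.

Definition dual_energy (chi : V -> R) (v : V -> R) : R :=
  2%:R * (\sum_(a : V) v a * chi a)
  - \sum_(e : E) (\sum_(c : V) incid e c * v c) ^+ 2 / r e.

Definition gap (chi : V -> R) (f : E -> R) (v : V -> R) : R :=
  energy f - dual_energy chi v.

(* A step of a walk: edge e traversed in its orientation (d = true,
   from src e to dst e) or against it (d = false). *)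
Definition step_from (st : E * bool) : V :=
  if st.2 then src st.1 else dst st.1.
Definition step_to (st : E * bool) : V :=
  if st.2 then dst st.1 else src st.1.

Fixpoint walk_in (T : {set E}) (a : V) (s : seq (E * bool)) (b : V) : bool :=
  match s with
  | [::] => a == b
  | st :: s' => [&& st.1 \in T, step_from st == a & walk_in T (step_to st) s' b]
  end.

Definition tpath (T : {set E}) (a b : V) (s : seq (E * bool)) : bool :=
  walk_in T a s b && uniq (a :: map step_to s).

(* T is a spanning tree and P a b is the unique a--b path in T *)
Definition tree_paths (T : {set E}) (P : V -> V -> seq (E * bool)) : Prop :=
  forall a b, tpath T a b (P a b) /\ (forall s, tpath T a b s -> s = P a b).

(* the flow along a path: value of the unit flow on edge e *)
Definition path_flow (s : seq (E * bool)) (e : E) : R :=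
  \sum_(st <- s | st.1 == e) (if st.2 then 1 else -1).

Variable P : V -> V -> seq (E * bool).

Definition pi_flow (a b : V) : E -> R := path_flow (P a b).

Definition cyc (e : E) : E -> R :=
  fun e' => (e' == e)%:R - pi_flow (src e) (dst e) e'.

Definition Rcyc (e : E) : R := \sum_(e' : E) r e' * cyc e e' ^+ 2.

Definition Delta (e : E) (f : E -> R) : R :=
  \sum_(e' : E) f e' * r e' * cyc e e'.

Definition tau (T : {set E}) : R := \sum_(e in ~: T) Rcyc e / r e.

Definition prob (T : {set E}) (e : E) : R := Rcyc e / (r e * tau T).

Definition cycle_update (g : E -> R) (e : E) : E -> R :=
  fun e' => g e' - Delta e g / Rcyc e * cyc e e'.

Definition iterate (f : E -> R) (s : seq E) : E -> R := foldl cycle_update f s.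

Definition tree_voltages (s0 : V) (f : E -> R) : V -> R :=
  fun a => \sum_(st <- P a s0) r st.1 * (if st.2 then f st.1 else - f st.1).

Definition nceil (x : R) : nat := `|Num.ceil x|%N.

(* E[ gap(g_{K'}, w_{K'}) ], K' uniform on {0,..,N-1}, N = ceil tau,
   e_1, e_2, ... i.i.d. with law p on E \ T, independent of K'. *)
Definition expected_gap (T : {set E}) (chi : V -> R) (s0 : V) (f : E -> R) : R :=
  (nceil (tau T))%:R^-1 *
  \sum_(k < nceil (tau T))
    \sum_(t : k.-tuple E | all (fun e => e \notin T) t)
      (\prod_(e <- t) prob T e) *
      gap chi (iterate f t) (tree_voltages s0 (iterate f t)).

End Electrical.

From HB Require Import structures.
From mathcomp Require Import all_boot all_order all_algebra.
From mathcomp Require Import ring lra.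
Set Implicit Arguments. Unset Strict Implicit. Unset Printing Implicit Defensive.
Import Order.TTheory GRing.Theory Num.Theory.
Local Open Scope ring_scope.

(* Write w(g) for the tree induced voltages of g.  Along any walk in T, the ohmic drop r*g accumulated
      from a to b equals w(g)(a) - w(g)(b); consequently the cycle vectors c_e
      are circulations (updates keep feasibility) and, for every edge e,
      Delta_e(g) = r_e g_e - (w(src e) - w(dst e)).
   2. One step.  For feasible g the gap splits edgewise:
      gap(g, w(g)) = sum_{e notin T} Delta_e(g)^2 / r_e, while an update along
      e lowers the energy by exactly Delta_e(g)^2 / R_e.  Averaging over p gives
      E_e[xi(g_e)] = xi(g) - gap(g, w(g)) / tau.
   3. Telescoping.  Iterating, E[gap(g_k, w_k)] = tau (E xi(g_k) - E xi(g_{k+1})),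
      so sum_{k < N} E[gap] = tau (xi(f) - E xi(g_N)) <= tau eps xi(f^star), since
      every g_N is feasible and hence has energy at least xi(f^star).  Dividing by
      N = ceil tau >= tau gives the theorem. *)

Lemma sum_delta (R : pzRingType) (I : finType) (h : I -> R) (x : I) :
  \sum_i (i == x)%:R * h i = h x.
Proof.
rewrite (bigD1 x) //= eqxx mul1r big1 ?addr0 // => i /negbTE ->.
by rewrite mul0r.
Qed.

Lemma sum_deltaC (R : pzRingType) (I : finType) (h : I -> R) (x : I) :
  \sum_i (x == i)%:R * h i = h x.
Proof. by rewrite -(sum_delta h x); apply: eq_bigr => i _; rewrite eq_sym. Qed.

Lemma sum_tuple_cons (R : nmodType) (I : finType) n (h : seq I -> R) :
  \sum_(t : n.+1.-tuple I) h t = \sum_i \sum_(t : n.-tuple I) h (i :: t).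
Proof.
rewrite pair_big /= (reindex (fun p : I * n.-tuple I => [tuple of p.1 :: p.2])) //=.
exists (fun t : n.+1.-tuple I => (thead t, [tuple of behead t])).
  by move=> [x t] _ /=; rewrite theadE; congr pair; exact: val_inj.
by move=> t _; apply: val_inj; case: t => [[|x s] hs].
Qed.

(* From a bound d <= c on the per-unit drop, the total t * d averaged over
   n >= t rounds stays below c >= 0; this turns tau (xi(f) - E xi(g_N)) into
   the average over N = ceil tau rounds. *)
Lemma rescaled_average_le (R : realFieldType) (t n d c : R) :
  0 < t -> t <= n -> 0 <= c -> d <= c -> n^-1 * (t * d) <= c.
Proof.
move=> t_gt0 le_tn c_ge0 le_dc.
have n_gt0 : 0 < n by exact: lt_le_trans le_tn.
rewrite ler_pdivrMl // (le_trans (ler_wpM2l (ltW t_gt0) le_dc)) //.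
exact: ler_wpM2r.
Qed.

Lemma le_nceil (R : archiRealFieldType) (x : R) : 0 <= x -> x <= (nceil x)%:R.
Proof.
move=> x_ge0; rewrite /nceil natr_absz ger0_norm ?ceil_ge // ceil_ge0.
exact: lt_le_trans (ltrN10 R) x_ge0.
Qed.

Section CycleUpdates.
Variables (R : archiRealFieldType) (V E : finType) (src dst : E -> V) (r : E -> R).
Variables (T : {set E}) (P : V -> V -> seq (E * bool)).

Local Notation sfrom := (step_from src dst).
Local Notation sto := (step_to src dst).
Local Notation walk := (walk_in src dst T).
Local Notation w := (tree_voltages r P).
Local Notation cyc := (cyc R src dst P).
Local Notation Rcyc := (Rcyc src dst r P).
Local Notation Delta := (Delta src dst r P).
Local Notation update := (cycle_update src dst r P).
Local Notation tauT := (tau src dst r P T).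
Local Notation prob := (prob src dst r P T).

Definition path_drop (g : E -> R) (s : seq (E * bool)) : R :=
  \sum_(st <- s) r st.1 * (if st.2 then g st.1 else - g st.1).

Lemma walk_edges_in_tree a s b : walk a s b -> forall st, st \in s -> st.1 \in T.
Proof.
elim: s a => [|st s IH] a //= /and3P [stT _ walk_s] st'.
by rewrite in_cons => /orP [/eqP -> //|]; exact: IH walk_s st'.
Qed.

Lemma path_flow_cons (st : E * bool) s e :
  path_flow R (st :: s) e = (st.1 == e)%:R * (if st.2 then 1 else -1) + path_flow R s e.
Proof. by rewrite /path_flow big_cons; case: (st.1 == e); rewrite ?mul1r ?mul0r ?add0r. Qed.

Lemma flow_pairing_drop g s : \sum_e r e * g e * path_flow R s e = path_drop g s.
Proof.
elim: s => [|st s IH].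
  by rewrite /path_drop big_nil big1 // => e _; rewrite /path_flow big_nil mulr0.
under eq_bigr do rewrite path_flow_cons mulrDr mulrCA.
rewrite big_split /= IH /path_drop big_cons sum_deltaC.
by case: st.2; rewrite ?mulr1 ?mulrN1 ?mulrN.
Qed.

Lemma incid_walk_flow a s b c : walk a s b ->
  \sum_e incid R src dst e c * path_flow R s e = (c == a)%:R - (c == b)%:R.
Proof.
elim: s a => [|st s IH] a /=.
  by move/eqP=> ->; rewrite subrr big1 // => e _; rewrite /path_flow big_nil mulr0.
case/and3P=> _ /eqP from_st walk_s.
under eq_bigr do rewrite path_flow_cons mulrDr mulrCA.
rewrite big_split /= (IH _ walk_s) sum_deltaC.
rewrite -from_st /step_from /step_to /incid; case: st.2 => /=; ring.
Qed.

Lemma incid_potentials (v : V -> R) e :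
  \sum_c incid R src dst e c * v c = v (src e) - v (dst e).
Proof.
rewrite /incid; under eq_bigr do rewrite mulrBl.
by rewrite sumrB !sum_delta.
Qed.

Lemma potential_pairing chi g (v : V -> R) : feasible src dst chi g ->
  \sum_a v a * chi a = \sum_e g e * (v (src e) - v (dst e)).
Proof.
move=> g_feas; under eq_bigr do rewrite -g_feas mulr_sumr.
rewrite exchange_big /=; apply: eq_bigr => e _.
by rewrite -incid_potentials mulr_sumr; apply: eq_bigr => c _; ring.
Qed.

Section Tree.
Hypothesis no_loop : forall e, src e != dst e.
Hypothesis hT : tree_paths src dst T P.

Lemma tpath_split s a b c : tpath src dst T a b s -> c \in a :: map sto s ->
  exists s1 s2, [/\ s = s1 ++ s2, tpath src dst T a c s1 & tpath src dst T c b s2].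
Proof.
elim: s a => [|st s IH] a.
  rewrite /tpath /= => /andP [/eqP <- _]; rewrite inE => /eqP ->.
  by exists [::], [::]; rewrite /tpath /= eqxx.
rewrite /tpath /= => /andP [/and3P [stT from_st walk_s] uniq_s].
rewrite in_cons => /orP [/eqP ->|c_in].
  exists [::], (st :: s); split => //; first by rewrite /tpath /= eqxx.
  by rewrite /tpath /= stT from_st walk_s.
have [s1 [s2 [s_eq /andP [walk1 _] tp2]]] :=
  IH (sto st) (introT andP (conj walk_s (andP uniq_s).2)) c_in.
exists (st :: s1), s2; rewrite s_eq; split => //.
rewrite /tpath /= stT from_st walk1 /=.
move: uniq_s; rewrite s_eq map_cat !in_cons !mem_cat cat_uniq !negb_or.
by move=> /and3P [/and3P [-> -> _] /andP [-> _] /and3P [-> _ _]].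
Qed.

Lemma tree_path_edge e : e \in T -> P (dst e) (src e) = [:: (e, false)].
Proof.
move=> eT; symmetry; apply: (hT _ _).2.
by rewrite /tpath /= eT eqxx /= /step_to /= eqxx inE eq_sym no_loop.
Qed.

Lemma tree_edge_ohm s0 g e : e \in T -> w s0 g (src e) - w s0 g (dst e) = r e * g e.
Proof.
move=> eT; rewrite /tree_voltages.
have [src_on|src_off] := boolP (src e \in dst e :: map sto (P (dst e) s0)).
  have [s1 [s2 [-> tp1 tp2]]] := tpath_split (hT (dst e) s0).1 src_on.
  rewrite ((hT _ _).2 _ tp1) tree_path_edge // -((hT _ _).2 _ tp2) /= big_cons /=.
  ring.
have tp : tpath src dst T (src e) s0 ((e, true) :: P (dst e) s0).
  case/andP: (hT (dst e) s0).1 => walk_P uniq_P.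
  by rewrite /tpath /= eT eqxx walk_P /= src_off.
by rewrite -((hT _ _).2 _ tp) big_cons /= addrK.
Qed.

Lemma walk_drop s0 g a s b : walk a s b -> path_drop g s = w s0 g a - w s0 g b.
Proof.
elim: s a => [|st s IH] a /=.
  by move/eqP=> ->; rewrite /path_drop big_nil subrr.
case/and3P=> stT /eqP from_st walk_s.
rewrite /path_drop big_cons -/(path_drop g s) (IH _ walk_s) -from_st.
rewrite (_ : r st.1 * _ = w s0 g (sfrom st) - w s0 g (sto st)) ?addrA ?subrK //.
rewrite /step_from /step_to; case: st stT {from_st walk_s} => e [] /= eT.
  by rewrite tree_edge_ohm.
by rewrite -opprB tree_edge_ohm // mulrN.
Qed.

Lemma incid_cyc e c : \sum_e' incid R src dst e' c * cyc e e' = 0.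
Proof.
rewrite /cyc; under eq_bigr do rewrite mulrBr.
rewrite sumrB (eq_bigr _ (fun e' _ => mulrC _ _)) sum_delta /pi_flow.
by rewrite (incid_walk_flow _ (andP (hT _ _).1).1) /incid subrr.
Qed.

Lemma feasible_update chi g e : feasible src dst chi g -> feasible src dst chi (update g e).
Proof.
move=> g_feas c; rewrite /cycle_update.
under eq_bigr do rewrite mulrBr mulrCA.
by rewrite sumrB -mulr_sumr incid_cyc mulr0 subr0 g_feas.
Qed.

Lemma Delta_voltages s0 g e :
  Delta e g = r e * g e - (w s0 g (src e) - w s0 g (dst e)).
Proof.
rewrite /Delta /cyc; under eq_bigr do rewrite mulrBr.
rewrite sumrB (eq_bigr _ (fun e' _ => mulrC _ _)) sum_delta.
rewrite -(walk_drop s0 g (andP (hT _ _).1).1) -flow_pairing_drop mulrC.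
by congr (_ - _); apply: eq_bigr => e' _; rewrite (mulrC (r e')).
Qed.

Lemma pi_flow_offtree e : e \notin T -> pi_flow R P (src e) (dst e) e = 0.
Proof.
move=> eNT; rewrite /pi_flow /path_flow big1_seq // => st /andP [/eqP st_e st_in].
by move: (walk_edges_in_tree (andP (hT _ _).1).1 st_in); rewrite st_e (negbTE eNT).
Qed.

Section Resistances.
Hypothesis r_pos : forall e, 0 < r e.

Lemma Rcyc_ge0 e : 0 <= Rcyc e.
Proof. by apply: sumr_ge0 => e' _; rewrite mulr_ge0 ?sqr_ge0 // ltW. Qed.

Lemma Rcyc_gt0 e : e \notin T -> 0 < Rcyc e.
Proof.
move=> eNT; rewrite /Rcyc (bigD1 e) //= /cyc eqxx pi_flow_offtree // subr0.
rewrite expr1n mulr1 ltr_wpDr ?r_pos //.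
by apply: sumr_ge0 => e' _; rewrite mulr_ge0 ?sqr_ge0 // ltW.
Qed.

Lemma energy_update g e : Rcyc e != 0 ->
  energy r (update g e) = energy r g - Delta e g ^+ 2 / Rcyc e.
Proof.
move=> Rcyc_neq0; set a := Delta e g / Rcyc e.
have expand e' : r e' * update g e e' ^+ 2 =
    r e' * g e' ^+ 2 - (2%:R * a) * (g e' * r e' * cyc e e')
    + a ^+ 2 * (r e' * cyc e e' ^+ 2).
  by rewrite /cycle_update -/a; ring.
rewrite /energy (eq_bigr _ (fun e' _ => expand e')) big_split sumrB /= -!mulr_sumr.
by rewrite -/(Delta e g) -/(Rcyc e) /a; field.
Qed.

Lemma gap_edgewise chi g (v : V -> R) : feasible src dst chi g ->
  gap src dst r chi g v = \sum_e (r e * g e - (v (src e) - v (dst e))) ^+ 2 / r e.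
Proof.
move=> g_feas; rewrite /gap /dual_energy (potential_pairing v g_feas).
under [X in _ - (_ - X)]eq_bigr do rewrite incid_potentials.
rewrite mulr_sumr -sumrB /energy -sumrB; apply: eq_bigr => e _.
by field; rewrite gt_eqF.
Qed.

Lemma gap_tree_voltages chi g s0 : feasible src dst chi g ->
  gap src dst r chi g (w s0 g) = \sum_(e in ~: T) Delta e g ^+ 2 / r e.
Proof.
move=> g_feas; rewrite (gap_edgewise _ g_feas) [RHS]big_mkcond /=.
apply: eq_bigr => e _; rewrite in_setC (Delta_voltages s0).
case: ifPn => // /negPn eT.
by rewrite tree_edge_ohm // subrr expr0n /= mul0r.
Qed.

Definition expect_iter (k : nat) (F : (E -> R) -> R) (g : E -> R) : R :=
  \sum_(t : k.-tuple E | all (fun e => e \notin T) t)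
    (\prod_(e <- t) prob e) * F (iterate src dst r P g t).

Lemma expect_iter0 F g : expect_iter 0 F g = F g.
Proof.
rewrite /expect_iter (big_pred1 [tuple]) => [|t]; first by rewrite big_nil mul1r.
by rewrite [t]tuple0; exact: esym (eqxx _).
Qed.

Lemma expect_iterS k F g :
  expect_iter k.+1 F g = \sum_(e | e \notin T) prob e * expect_iter k F (update g e).
Proof.
rewrite /expect_iter big_mkcond.
rewrite (sum_tuple_cons _ (fun s => if all (fun e => e \notin T) s then
   (\prod_(x <- s) prob x) * F (iterate src dst r P g s) else 0)).
rewrite (bigID (fun e => e \notin T)) /= [X in _ + X]big1 ?addr0; last first.
  by move=> e /negPn eT; rewrite big1 // => t _; rewrite /= eT.
apply: eq_bigr => e eNT /=; rewrite eNT -big_mkcond mulr_sumr.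
by apply: eq_bigr => t _; rewrite big_cons mulrA.
Qed.

Section Distribution.
Hypothesis hnT : exists e, e \notin T.

Lemma tau_gt0 : 0 < tauT.
Proof.
case: hnT => e0 e0NT; rewrite /tau (bigD1 e0) ?in_setC //=.
rewrite ltr_wpDr ?divr_gt0 ?Rcyc_gt0 ?r_pos //.
by apply: sumr_ge0 => e _; rewrite divr_ge0 ?Rcyc_ge0 // ltW.
Qed.

Lemma prob_ge0 e : 0 <= prob e.
Proof. by rewrite /prob divr_ge0 ?Rcyc_ge0 // mulr_ge0 // ltW ?r_pos ?tau_gt0. Qed.

Lemma sum_prob : \sum_(e | e \notin T) prob e = 1.
Proof.
have -> : \sum_(e | e \notin T) prob e = tauT / tauT.
  rewrite /tau mulr_suml; apply: eq_big => [e|e _]; first by rewrite in_setC.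
  by rewrite /prob invfM mulrA.
by rewrite divff // gt_eqF // tau_gt0.
Qed.

Lemma expected_energy_step chi s0 g : feasible src dst chi g ->
  \sum_(e | e \notin T) prob e * energy r (update g e)
  = energy r g - gap src dst r chi g (w s0 g) / tauT.
Proof.
move=> g_feas; rewrite (gap_tree_voltages s0 g_feas).
rewrite (eq_bigr (fun e => prob e * energy r g - (Delta e g ^+ 2 / r e) / tauT)).
  rewrite sumrB -mulr_suml sum_prob mul1r -mulr_suml; congr (_ - (_ / _)).
  by apply: eq_bigl => e; rewrite in_setC.
move=> e eNT; rewrite energy_update ?gt_eqF ?Rcyc_gt0 // mulrBr /prob.
by congr (_ - _); field; rewrite ?gt_eqF ?Rcyc_gt0 ?r_pos ?tau_gt0.
Qed.

Lemma expect_iter_ge chi k F c g : feasible src dst chi g ->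
  (forall h, feasible src dst chi h -> c <= F h) -> c <= expect_iter k F g.
Proof.
move=> g_feas F_ge; elim: k g g_feas => [|k IH] g g_feas.
  by rewrite expect_iter0 F_ge.
rewrite expect_iterS -[c]mul1r -sum_prob mulr_suml.
apply: ler_sum => e _; rewrite ler_wpM2l ?prob_ge0 //.
exact/IH/feasible_update.
Qed.

Lemma expect_gap chi s0 k g : feasible src dst chi g ->
  expect_iter k (fun h => gap src dst r chi h (w s0 h)) g =
  tauT * (expect_iter k (energy r) g - expect_iter k.+1 (energy r) g).
Proof.
elim: k g => [|k IH] g g_feas.
  rewrite expect_iterS; under eq_bigr do rewrite expect_iter0.
  rewrite !expect_iter0 (expected_energy_step s0 g_feas); field.
  by rewrite gt_eqF // tau_gt0.
rewrite expect_iterS (expect_iterS k) (expect_iterS k.+1) mulrBr !mulr_sumr -sumrB.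
apply: eq_bigr => e _.
by rewrite IH; [ring | exact: feasible_update].
Qed.

Lemma sum_expect_gap chi s0 f N : feasible src dst chi f ->
  \sum_(k < N) expect_iter k (fun h => gap src dst r chi h (w s0 h)) f =
  tauT * (energy r f - expect_iter N (energy r) f).
Proof.
move=> f_feas; elim: N => [|N IH]; first by rewrite big_ord0 expect_iter0 subrr mulr0.
by rewrite big_ord_recr /= IH (expect_gap _ _ f_feas); ring.
Qed.

End Distribution.
End Resistances.
End Tree.
End CycleUpdates.

Theorem lemma7p3 (R : archiRealFieldType) (V E : finType)
    (src dst : E -> V) (r : E -> R)
    (no_loop : forall e, src e != dst e)
    (r_pos : forall e, 0 < r e)
    (T : {set E}) (P : V -> V -> seq (E * bool))
    (hT : tree_paths src dst T P)
    (hnT : exists e, e \notin T)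
    (chi : V -> R) (hchi : \sum_(a : V) chi a = 0)
    (fstar : E -> R) (hfstar : feasible src dst chi fstar)
    (fstar_min : forall h, feasible src dst chi h -> energy r fstar <= energy r h)
    (s0 : V) (eps : R) (heps : 0 <= eps)
    (f : E -> R) (hf : feasible src dst chi f)
    (hfe : energy r f <= (1 + eps) * energy r fstar) :
  expected_gap src dst r P T chi s0 f <= eps * energy r fstar.
Proof.
set N := nceil (tau src dst r P T).
have -> : expected_gap src dst r P T chi s0 f =
    N%:R^-1 * \sum_(k < N) expect_iter src dst r T P k
                (fun h => gap src dst r chi h (tree_voltages r P s0 h)) f by [].
rewrite (sum_expect_gap no_loop hT r_pos hnT s0 N hf).
have tau_pos := tau_gt0 hT r_pos hnT.
have final_ge := expect_iter_ge hT r_pos hnT N hf fstar_min.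
have fstar_ge0 : 0 <= energy r fstar.
  by apply: sumr_ge0 => e _; rewrite mulr_ge0 ?sqr_ge0 // ltW.
apply: rescaled_average_le => //; first exact/le_nceil/ltW.
  exact: mulr_ge0.
by move: hfe; rewrite mulrDl mul1r; lra.
Qed.
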